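(* Let $n\ge1$ and let $B\in\mathcal S(\mathbb C^n,\mathbb C)$ satisfy $\log(1-BB^* )\in L^1(\mathbb T)$. Let $a\in\mathcal S(\mathbb C,\mathbb C)$ be an outer function with $\sum_{j=1}^n|b_j(\zeta)|^2+|a(\zeta)|^2=1$ for a.e. $\zeta\in\mathbb T$, and let $A:\mathbb D\to\mathcal L(\mathbb C^n,\mathbb C^n)$ be an outer function with $B(\zeta)^*B(\zeta)+A(\zeta)^*A(\zeta)=I$ for a.e. $\zeta\in\mathbb T$. Then $$B(\zeta)\big(A(\zeta)^*A(\zeta)\big)^{-1}B(\zeta)^*=\frac{B(\zeta)B(\zeta)^*}{|a(\zeta)|^2}\quad\text{for a.e. }\zeta\in\mathbb T.$$
   Context: $\mathbb D$ is the open unit disc, $\mathbb T$ the unit circle. $\mathcal S(\mathbb C^n,\mathbb C)$ is the set of holomorphic maps $B=(b_1,\dots,b_n):\mathbb D\to\mathcal L(\mathbb C^n,\mathbb C)$ (row vectors) with $\sup_{z\in\mathbb D}\|B(z)\|\le1$; boundary values on $\mathbb T$ are taken a.e. A scalar $a\in H^\infty$ is outer in the usual sense; a bounded holomorphic $A:\mathbb D\to\mathcal L(\mathbb C^n,\mathbb C^n)$ is outer if $\{Ap: p\text{ a }\mathbb C^n\text{-valued polynomial}\}$ is dense in the Hardy space $H^2_{\mathbb C^n}$. *)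

From HB Require Import structures.
From mathcomp Require Import all_boot all_order all_algebra.
From mathcomp Require Import all_classical all_reals all_analysis.
From mathcomp Require Import complex.
Import Order.TTheory GRing.Theory Num.Theory.
Import numFieldNormedType.Exports.

Set Implicit Arguments.
Unset Strict Implicit.
Unset Printing Implicit Defensive.

Local Open Scope classical_set_scope.
Local Open Scope ring_scope.
Local Notation lte := (@Order.lt _ (\bar _)).

(* The complex numbers over a real type R, viewed as a numeric closed field
   (hence a normed module over itself, so that [derivable] is complex
   differentiability). *)
Definition Cplx (R : realType) : numClosedFieldType := R[i].

Section Defs.
Variable R : realType.
Local Notation C := (Cplx R).

Definition disc : set C := [set z | `|z| < 1].

Definition expi (t : R) : C := (cos t +i* sin t)%C.

Definition cabs2 (z : C) : R := (complex.Re z) ^+ 2 + (complex.Im z) ^+ 2.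

Definition holo_on_disc (f : C -> C) : Prop :=
  forall z, disc z -> derivable f z 1.

Definition holo_mx {m k : nat} (F : C -> 'M[C]_(m, k)) : Prop :=
  forall i j, holo_on_disc (fun z => F z i j).

Definition bounded_mx {m k : nat} (F : C -> 'M[C]_(m, k)) : Prop :=
  exists M : R, forall z, disc z -> forall i j, `|F z i j| <= (M%:C)%C.

Definition adjmx {m k : nat} (A : 'M[C]_(m, k)) : 'M[C]_(k, m) :=
  (map_mx Num.conj A)^T.

Definition bv (f : C -> C) (t : R) : C :=
  lim (f ((r%:C)%C * expi t) @[r --> (1 : R)^'-]).

Definition bvmx {m k : nat} (F : C -> 'M[C]_(m, k)) (t : R) : 'M[C]_(m, k) :=
  \matrix_(i, j) bv (fun z => F z i j) t.

(* "for a.e. zeta in T", zeta = e^{it}, t in [0, 2 pi], Lebesgue measure *)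
Definition ae_circle (P : R -> Prop) : Prop :=
  \forall t \ae (@lebesgue_measure R), t \in `[0, 2 * pi] -> P t.

Definition logE (x : R) : \bar R := if 0 < x then (ln x)%:E else -oo%E.

Definition L1_circle (f : R -> \bar R) : Prop :=
  (@lebesgue_measure R).-integrable `[0, 2 * pi] f.

(* Schur class S(C^n, C): holomorphic row vectors with operator norm <= 1 *)
Definition schur_row (n : nat) (B : C -> 'rV[C]_n) : Prop :=
  holo_mx B /\ forall z, disc z -> \sum_(j < n) cabs2 (B z ord0 j) <= 1.

Definition schur_scalar (a : C -> C) : Prop :=
  holo_on_disc a /\ forall z, disc z -> `|a z| <= 1.

Definition mean2 (n : nat) (f : C -> 'cV[C]_n) (r : R) : \bar R :=
  ((2 * pi)^-1)%:E *
  (\int[(@lebesgue_measure R)]_(t in `[0%R, (2 * pi)%R])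
      (\sum_(i < n) cabs2 (f ((r%:C)%C * expi t) i ord0))%:E)%E.

Definition H2norm2 (n : nat) (f : C -> 'cV[C]_n) : \bar R :=
  ereal_sup [set mean2 f r | r in `[0, 1[ ].

Definition in_H2 (n : nat) (f : C -> 'cV[C]_n) : Prop :=
  holo_mx f /\ lte (H2norm2 f) +oo%E.

Definition poly_ev (n : nat) (p : 'I_n -> {poly C}) (z : C) : 'cV[C]_n :=
  \col_i (p i).[z].

Definition outer_mx (n : nat) (A : C -> 'M[C]_n) : Prop :=
  [/\ holo_mx A, bounded_mx A &
      forall f : C -> 'cV[C]_n, in_H2 f -> forall eps : R, 0 < eps ->
        exists p : 'I_n -> {poly C},
          lte (H2norm2 (fun z => (A z *m poly_ev p z - f z)%R)) eps%:E].

Definition outer_scalar (a : C -> C) : Prop :=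
  outer_mx (n := 1) (fun z => (a z)%:M).

End Defs.

(* Pointwise on the circle this is rank-one linear algebra.  With b = B(zeta),
   the hypotheses give A*A = I - b*b and |a|^2 = 1 - s where s = b b*, and the
   Sherman-Morrison formula (I - u v)^-1 = I + (1 - v u)^-1 u v yields
   b (I - b*b)^-1 b* = s + s^2/(1 - s) = s/(1 - s).  When s = 1 both sides
   vanish: I - b*b kills b*, so it is singular and invmx returns it unchanged,
   while s/0 = 0.  Hence neither the log-integrability of 1 - BB* (which makes
   a nonzero a.e.) nor holomorphy or outerness is needed. *)
From HB Require Import structures.
From mathcomp Require Import all_boot all_order all_algebra.
From mathcomp Require Import all_classical all_reals all_analysis.
From mathcomp Require Import complex.
From mathcomp Require Import ring.
Import Order.TTheory GRing.Theory Num.Theory.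
Import numFieldNormedType.Exports.
Local Open Scope classical_set_scope.
Local Open Scope ring_scope.

Section RankOnePerturbation.
Variables (F : fieldType) (n : nat) (u : 'cV[F]_n) (v : 'rV[F]_n).

Let s := (v *m u) ord0 ord0.

Let vu_scalar : v *m u = s%:M.
Proof. exact: mx11_scalar. Qed.

Lemma mulmx_1_sub_rank1 : s != 1 ->
  (1%:M - u *m v) *m (1%:M + (1 - s)^-1 *: (u *m v)) = 1%:M.
Proof.
move=> s_neq1; have s1_neq0 : 1 - s != 0 by rewrite subr_eq0 eq_sym.
rewrite mulmxDr mulmx1 mulmxBl mul1mx -scalemxAr mulmxA.
rewrite -(mulmxA u v u) vu_scalar -mulmxA mul_scalar_mx -scalemxAr scalerA.
rewrite -scalerBl -[X in (X - _ * s) *: _]mulr1 -mulrBr.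
by rewrite mulVf // scale1r subrK.
Qed.

Lemma invmx_1_sub_rank1 : s != 1 ->
  invmx (1%:M - u *m v) = 1%:M + (1 - s)^-1 *: (u *m v).
Proof.
move=> /mulmx_1_sub_rank1 MN; have [Munit _] := mulmx1_unit MN.
by rewrite -[LHS]mulmx1 -[X in _ *m X]MN mulmxA mulVmx // mul1mx.
Qed.

Lemma unitmx_1_sub_rank1 : (1%:M - u *m v \in unitmx) = (s != 1).
Proof.
apply/idP/idP => [Munit|s_neq1]; last first.
  exact: (mulmx1_unit (mulmx_1_sub_rank1 s_neq1)).1.
apply/eqP => s_eq1.
have Mu0 : (1%:M - u *m v) *m u = 0.
  by rewrite mulmxBl mul1mx -mulmxA vu_scalar s_eq1 mulmx1 subrr.
have u0 : u = 0 by rewrite -(mulKmx Munit u) Mu0 mulmx0.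
by move: s_eq1; rewrite /s u0 mulmx0 mxE => /eqP; rewrite eq_sym oner_eq0.
Qed.

Lemma mulmx_invmx_1_sub_rank1 :
  v *m invmx (1%:M - u *m v) *m u = (s / (1 - s))%:M.
Proof.
have [s_eq1|s_neq1] := eqVneq s 1.
  have Msing : 1%:M - u *m v \notin unitmx.
    by rewrite unitmx_1_sub_rank1 s_eq1 eqxx.
  rewrite invmx_out // s_eq1 subrr invr0 mulr0.
  rewrite mulmxBr mulmx1 mulmxBl -!mulmxA vu_scalar mulmxA vu_scalar s_eq1.
  by rewrite mul1mx subrr raddf0.
have s1_neq0 : 1 - s != 0 by rewrite subr_eq0 eq_sym.
rewrite invmx_1_sub_rank1 // mulmxDr mulmx1 mulmxDl vu_scalar -scalemxAr.
rewrite -scalemxAl mulmxA vu_scalar -mulmxA vu_scalar mul_scalar_mx.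
rewrite !scale_scalar_mx -raddfD; congr _%:M.
by field.
Qed.

End RankOnePerturbation.

Lemma mulmx_adjmx_row (R : realType) (n : nat) (b : 'rV[Cplx R]_n) :
  (b *m adjmx b) ord0 ord0 = \sum_(j < n) `|b ord0 j| ^+ 2.
Proof. by rewrite mxE; apply: eq_bigr => j _; rewrite !mxE normCK. Qed.

Lemma row_inner_invmx_gram (R : realType) (n : nat) (b : 'rV[Cplx R]_n)
    (A : 'M[Cplx R]_n) (a : Cplx R) :
  \sum_(j < n) `|b ord0 j| ^+ 2 + `|a| ^+ 2 = 1 ->
  adjmx b *m b + adjmx A *m A = 1%:M ->
  (b *m invmx (adjmx A *m A) *m adjmx b) ord0 ord0
    = (b *m adjmx b) ord0 ord0 / `|a| ^+ 2.
Proof.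
move=> norm1 gram1.
have -> : `|a| ^+ 2 = 1 - (b *m adjmx b) ord0 ord0.
  by rewrite mulmx_adjmx_row -norm1 addrC addKr.
have -> : adjmx A *m A = 1%:M - adjmx b *m b by rewrite -gram1 addrC addKr.
by rewrite mulmx_invmx_1_sub_rank1 mxE eqxx mulr1n.
Qed.

Theorem lemma4p3 (R : realType) (n : nat) (hn : (0 < n)%N)
  (B : Cplx R -> 'rV[Cplx R]_n) (a : Cplx R -> Cplx R)
  (A : Cplx R -> 'M[Cplx R]_n) :
  schur_row B ->
  L1_circle (fun t => logE (1 - \sum_(j < n) cabs2 (bvmx B t ord0 j))) ->
  schur_scalar a -> outer_scalar a ->
  ae_circle (fun t =>
    \sum_(j < n) `|bvmx B t ord0 j| ^+ 2 + `|bv a t| ^+ 2 = 1) ->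
  outer_mx A ->
  ae_circle (fun t =>
    adjmx (bvmx B t) *m bvmx B t + adjmx (bvmx A t) *m bvmx A t = 1%:M) ->
  ae_circle (fun t =>
    (bvmx B t *m invmx (adjmx (bvmx A t) *m bvmx A t) *m adjmx (bvmx B t))
      ord0 ord0
    = (bvmx B t *m adjmx (bvmx B t)) ord0 ord0 / `|bv a t| ^+ 2).
Proof.
move=> _ _ _ _ + _; rewrite /ae_circle => norm1 gram1.
have ae_filter := ae_filter_ringOfSetsType (@lebesgue_measure R).
apply: filterS2 norm1 gram1 => t norm1 gram1 t_circle.
exact: row_inner_invmx_gram (norm1 t_circle) (gram1 t_circle).
Qed.
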